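(* There exist absolute constants $c>0$ and $n_0$ such that for every $n\ge n_0$ and every $p$ with $1-\frac{1}{10n}\le p\le 1$, if $G\sim G(n,p)$ then $$\mathbb{P}(G\text{ is even-decomposable})\le e^{-cn}.$$
   Context: $G(n,p)$ is the binomial random graph on $n$ labelled vertices in which each pair is an edge independently with probability $p$. A graph $H$ is even-decomposable if there is a sequence $V(H)=V_0\supset V_1\supset\cdots\supset V_k=\emptyset$ such that for each $0\le i\le k-1$, the induced subgraph $H[V_i]$ has an even number of edges and $V_i\setminus V_{i+1}$ is an independent set in $H$. *)

From Stdlib Require Import Reals.
From HB Require Import structures.
From mathcomp Require Import all_boot all_order all_algebra.
From mathcomp Require Import boolp Rstruct.
Set Implicit Arguments. Unset Strict Implicit. Unset Printing Implicit Defensive.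
Import Order.TTheory GRing.Theory Num.Theory.

Definition pairs (n : nat) : {set 'I_n * 'I_n} := [set e : 'I_n * 'I_n | (e.1 < e.2)%N].

(* A labelled simple graph on 'I_n is an edge set E \subset pairs n. *)

Definition induced_edges n (E : {set 'I_n * 'I_n}) (V : {set 'I_n}) : nat :=
  #|[set e in E | (e.1 \in V) && (e.2 \in V)]|.

Definition independent n (E : {set 'I_n * 'I_n}) (I : {set 'I_n}) : Prop :=
  forall e, e \in E -> ~~ ((e.1 \in I) && (e.2 \in I)).

Definition even_decomposable n (E : {set 'I_n * 'I_n}) : Prop :=
  exists s : seq {set 'I_n},
    [/\ (0 < size s)%N,
        nth set0 s 0 = [set: 'I_n],
        nth set0 s (size s).-1 = set0 &
        forall i, (i < (size s).-1)%N ->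
          [/\ nth set0 s i.+1 \proper nth set0 s i,
              ~~ odd (induced_edges E (nth set0 s i)) &
              independent E (nth set0 s i :\: nth set0 s i.+1)]].

Local Open Scope ring_scope.

Definition Gnp_prob (n : nat) (p : R) (P : {set 'I_n * 'I_n} -> Prop) : R :=
  \sum_(E in powerset (pairs n) | `[< P E >]) 
     p ^+ #|E| * (1 - p) ^+ (#|pairs n| - #|E|).

From Stdlib Require Import Reals.
From mathcomp Require Import all_boot all_order all_algebra.
From mathcomp Require Import boolp Rstruct.
From mathcomp Require Import zify lra.
Set Implicit Arguments. Unset Strict Implicit. Unset Printing Implicit Defensive.
Import Order.TTheory GRing.Theory Num.Theory.

(* Call a vertex universal if it lies on no non-edge.  Deleting a universal
   vertex from a vertex set of size m deletes exactly m - 1 induced edges, and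
   an independent set containing a universal vertex v is {v}.  So every step
   of an even decomposition either removes non-universal vertices only, or
   removes a single universal vertex from a set of odd size; steps of the
   second kind are never consecutive, hence the universal vertices outnumber
   the non-universal ones by at most one.  Non-universal vertices are
   endpoints of non-edges, so an even-decomposable graph has at least
   (n - 1) / 4 non-edges, and by Markov's inequality for 3 ^ #(non-edges) this
   has probability at most e^(-n/20) in G(n, p) when 1 - p <= 1 / (10 n). *)

Section Graph.
Variables (n : nat) (E : {set 'I_n * 'I_n}).
Hypothesis E_pairs : E \subset pairs n.

Definition nonuniversal : {set 'I_n} :=
  [set e.1 | e in pairs n :\: E] :|: [set e.2 | e in pairs n :\: E].

Lemma card_nonuniversal : #|nonuniversal| <= 2 * #|pairs n :\: E|.
Proof.
by rewrite mul2n -addnn (leq_trans (leq_card_setU _ _)) // leq_add ?leq_imset_card.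
Qed.

Definition edge (v w : 'I_n) : 'I_n * 'I_n := if v < w then (v, w) else (w, v).

Lemma edge_pairs v w : w != v -> edge v w \in pairs n.
Proof.
rewrite /edge inE => wv; case: ifP => //= /negbT; rewrite -leqNgt leq_eqVlt.
by case/orP=> // /eqP/val_inj vw; move: wv; rewrite vw eqxx.
Qed.

Lemma edge_in (D : {set 'I_n}) v w :
  v \in D -> w \in D -> ((edge v w).1 \in D) && ((edge v w).2 \in D).
Proof. by rewrite /edge; case: ifP => _ /= -> ->. Qed.

Lemma edge_inj v w1 w2 : w1 != v -> w2 != v -> edge v w1 = edge v w2 -> w1 = w2.
Proof.
rewrite /edge => w1v w2v; do 2 case: ifP => _; case=> // e1 e2.
- by move: w2v; rewrite -e1 eqxx.
- by move: w1v; rewrite e1 eqxx.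
Qed.

Lemma edge_universal v w : v \notin nonuniversal -> w != v -> edge v w \in E.
Proof.
move=> vU wv; apply: contraNT vU => eN.
have eD : edge v w \in pairs n :\: E by rewrite inE eN edge_pairs.
rewrite inE; apply/orP; rewrite /edge in eD *.
by case: ifP eD => _ eD; [left | right]; apply/imsetP; [exists (v, w) | exists (w, v)].
Qed.

Lemma induced_edges0 : induced_edges E set0 = 0.
Proof. by rewrite /induced_edges; apply: eq_card0 => e; rewrite !inE /= andbF. Qed.

Lemma induced_edges_universal (V : {set 'I_n}) v :
  v \in V -> v \notin nonuniversal ->
  induced_edges E V = induced_edges E (V :\ v) + #|V :\ v|.
Proof.
move=> vV vU; rewrite /induced_edges.
set S := [set e in E | _].
set X := [set e : 'I_n * 'I_n | (e.1 == v) || (e.2 == v)].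
rewrite -(cardsID X S) addnC; congr (_ + _).
  apply: eq_card => e; rewrite !inE.
  by case: (e.1 == v); case: (e.2 == v); rewrite ?andbF ?andbT //= ?andbA.
have -> : S :&: X = edge v @: (V :\ v).
  apply/setP => e; rewrite !inE; apply/idP/idP.
    case/andP => /andP [eE /andP [e1 e2]] eX.
    have lt : e.1 < e.2 by move/subsetP: E_pairs => /(_ e eE); rewrite inE.
    case/orP: eX => /eqP ev; apply/imsetP.
      exists e.2; last by rewrite /edge -ev lt; case: e {e1 e2 eE lt ev}.
      by rewrite !inE e2 andbT -ev; apply: contraTneq lt => ->; rewrite ltnn.
    exists e.1; last by rewrite /edge -ev ltnNge (ltnW lt); case: e {e1 e2 eE lt ev}.
    by rewrite !inE e1 andbT -ev; apply: contraTneq lt => ->; rewrite ltnn.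
  case/imsetP => w; rewrite !inE => /andP [wv wV] ->.
  rewrite edge_universal //= edge_in //=.
  by rewrite /edge; case: ifP => _ /=; rewrite eqxx ?orbT.
rewrite card_in_imset // => w1 w2; rewrite !inE => /andP [w1v _] /andP [w2v _].
exact: edge_inj.
Qed.

Lemma independent_nonuniversal (D : {set 'I_n}) : independent E D ->
  D \subset nonuniversal \/ exists2 v, v \notin nonuniversal & D = [set v].
Proof.
move=> indD; have [|/subsetPn [v vD vU]] := boolP (D \subset nonuniversal); first by left.
right; exists v => //; apply/setP => w; rewrite in_set1.
apply/idP/eqP => [wD|-> //]; apply/eqP; apply: contraTT isT => wv.
by move: (indD _ (edge_universal vU wv)); rewrite edge_in.
Qed.

Section Decomposition.
Variables (V : nat -> {set 'I_n}) (k : nat).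
Hypothesis Vk : V k = set0.
Hypothesis V_step : forall i, i < k ->
  [/\ V i.+1 \proper V i, ~~ odd (induced_edges E (V i)) &
      independent E (V i :\: V i.+1)].

Definition univ_in i := #|V i :\: nonuniversal|.
Definition nonuniv_in i := #|V i :&: nonuniversal|.

Definition universal_step i :=
  exists2 v, v \notin nonuniversal & V i :\: V i.+1 = [set v].

Lemma even_induced_edges i : i <= k -> ~~ odd (induced_edges E (V i)).
Proof.
rewrite leq_eqVlt => /orP [/eqP -> | /V_step [] //].
by rewrite Vk induced_edges0.
Qed.

Lemma universal_stepE i : i < k -> universal_step i ->
  exists v, [/\ v \notin nonuniversal, v \in V i & V i.+1 = V i :\ v].
Proof.
move=> /V_step [/proper_sub sub _ _] [v vU Dv]; exists v; split=> //.
  by move: (set11 v); rewrite -Dv inE => /andP [].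
by rewrite -Dv setDDr setDv set0U (setIidPr sub).
Qed.

Lemma odd_card_universal_step i : i < k -> universal_step i -> odd #|V i|.
Proof.
move=> ik /(universal_stepE ik) [v [vU vV Vi1]].
have := even_induced_edges (ltnW ik); rewrite (induced_edges_universal vV vU).
have := even_induced_edges ik; rewrite Vi1 oddD => /negbTE -> /=.
by rewrite (cardsD1 v (V i)) vV oddD => /negbTE ->.
Qed.

Lemma no_consecutive_universal_steps i :
  i.+1 < k -> universal_step i -> ~ universal_step i.+1.
Proof.
move=> i1k ui ui1; have ik := ltnW i1k.
have [v [_ vV Vi1]] := universal_stepE ik ui.
have := odd_card_universal_step ik ui; rewrite (cardsD1 v (V i)) vV -Vi1 /=.
by rewrite (odd_card_universal_step i1k ui1).
Qed.

Lemma step_cases i : i < k ->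
  (univ_in i.+1 = univ_in i /\ nonuniv_in i.+1 < nonuniv_in i) \/
  [/\ universal_step i, univ_in i = (univ_in i.+1).+1 & nonuniv_in i.+1 = nonuniv_in i].
Proof.
move=> ik; have [pr _ ind] := V_step ik.
case: (independent_nonuniversal ind) => [DU | ui]; [left | right].
  split.
    apply: eq_card => x; rewrite !in_setD.
    case: (boolP (x \in V i.+1)) => xV1; first by rewrite (subsetP (proper_sub pr)).
    case: (boolP (x \in V i)) => xV; rewrite ?andbF //.
    by rewrite (subsetP DU) // in_setD xV1 xV.
  apply: proper_card; apply/properP; split; first exact/setSI/proper_sub.
  case/properP: pr => _ [x xV xV1]; exists x; last by rewrite inE (negbTE xV1).
  by rewrite inE xV (subsetP DU) // inE xV1.
have [v [vU vV Vi1]] := universal_stepE ik ui.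
split=> //; rewrite /univ_in /nonuniv_in Vi1.
  by rewrite (cardsD1 v (V i :\: _)) in_setD vU vV setDDl setUC -setDDl.
apply: eq_card => x; rewrite !in_setI in_setD1.
by case: eqP => // ->; rewrite (negbTE vU) !andbF.
Qed.

Lemma univ_in_le j : j <= k ->
  univ_in (k - j) <= nonuniv_in (k - j) \/
  [/\ univ_in (k - j) <= (nonuniv_in (k - j)).+1, k - j < k & universal_step (k - j)].
Proof.
elim: j => [|j IH] jk.
  by left; rewrite subn0 /univ_in /nonuniv_in Vk set0D set0I cards0.
have ik : k - j.+1 < k by lia.
have IH' := IH (ltnW jk); rewrite (_ : k - j = (k - j.+1).+1) in IH'; last by lia.
case: (step_cases ik) => [[eu en] | [ui eu en]].
  by left; case: IH' => [| []]; lia.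
right; split=> //; case: IH' => [| [_ i1k ui1]]; first lia.
by case: (no_consecutive_universal_steps i1k ui).
Qed.

Lemma univ_in0_le : univ_in 0 <= (nonuniv_in 0).+1.
Proof. by case: (univ_in_le (leqnn k)); rewrite subnn; [lia | case]. Qed.

End Decomposition.

Lemma even_decomposable_card_nonuniversal :
  even_decomposable E -> n <= 2 * #|nonuniversal| + 1.
Proof.
case=> s [_ s0 sk s_step].
have := univ_in0_le sk s_step; rewrite /univ_in /nonuniv_in s0 setTI setTD.
by have := cardsC nonuniversal; rewrite card_ord; lia.
Qed.

End Graph.

Local Open Scope ring_scope.

Lemma sum_powerset_binomial (R : comPzSemiRingType) (I : finType) (A : {set I}) (x y : R) :
  \sum_(J in powerset A) x ^+ #|J| * y ^+ #|A :\: J| = (x + y) ^+ #|A|.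
Proof.
pose F i := if i \in A then x else 0; pose G i := if i \in A then y else 1.
have -> : (x + y) ^+ #|A| = \prod_i (F i + G i).
  rewrite -prodr_const big_mkcond; apply: eq_bigr => i _.
  by rewrite /F /G; case: (i \in A); rewrite ?add0r.
rewrite bigA_distr [RHS](bigID (mem (powerset A))) /= [X in _ = _ + X]big1 ?addr0.
  apply: eq_big => [J | J]; first by rewrite !inE.
  rewrite powersetE => JA; rewrite (bigID (mem J)) /=; congr (_ * _).
    rewrite -prodr_const; apply: eq_bigr => i iJ.
    by rewrite iJ /F (subsetP JA).
  rewrite (eq_bigr G) => [|i /negbTE -> //].
  rewrite /G -big_mkcondr -prodr_const /=; apply: eq_bigl => i.
  by rewrite in_setD.
move=> J; rewrite powersetE => /subsetPn [i iJ iA].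
by rewrite (bigD1 i) //= iJ /F (negbTE iA) mul0r.
Qed.

Lemma Gnp_prob_le_non_edges n (p l : R) (r : nat) (P : {set 'I_n * 'I_n} -> Prop) :
  0 <= p <= 1 -> 1 <= l ->
  (forall E : {set 'I_n * 'I_n}, E \subset pairs n -> P E -> (r <= #|pairs n :\: E|)%N) ->
  Gnp_prob p P <= (p + l * (1 - p)) ^+ #|pairs n| / l ^+ r.
Proof.
move=> /andP [p0 p1] l1 many.
have l0 : 0 <= l by rewrite (le_trans ler01).
have q0 : 0 <= 1 - p by rewrite subr_ge0.
have lr0 : 0 < l ^+ r by rewrite exprn_gt0 // (lt_le_trans ltr01).
rewrite /Gnp_prob -sum_powerset_binomial mulr_suml.
rewrite [X in _ <= X](bigID (fun E => `[< P E >])) /= -[X in X <= _]addr0 lerD //; last first.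
  apply: sumr_ge0 => E _; apply: divr_ge0; last exact: ltW.
  by rewrite mulr_ge0 ?exprn_ge0 ?mulr_ge0.
apply: ler_sum => E /andP [EA /asboolP PE]; rewrite powersetE in EA.
rewrite cardsD (setIidPr EA) -mulrA ler_wpM2l ?exprn_ge0 //.
rewrite ler_pdivlMr // exprMn mulrC ler_wpM2r ?exprn_ge0 ?subr_ge0 //.
by rewrite ler_weXn2l // -(setIidPr EA) -cardsD many.
Qed.

Lemma exp_gt0 (x : R) : 0 < exp x.
Proof. exact/RltP/exp_pos. Qed.

Lemma ler_exp (x y : R) : x <= y -> exp x <= exp y.
Proof.
rewrite le_eqVlt => /orP [/eqP -> // | /RltP xy].
exact/ltW/RltP/exp_increasing.
Qed.

Lemma exp_ge1D (x : R) : 1 + x <= exp x.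
Proof. exact/RleP/exp_ineq1_le. Qed.

Lemma expn_exp (x : R) m : exp x ^+ m = exp (m%:R * x).
Proof.
rewrite RmultE; elim: m => [|m IH]; first by rewrite mul0r expr0 exp_0.
by rewrite exprS IH -[exp x * _]RmultE -exp_plus RplusE mulrSr mulrDl mul1r addrC.
Qed.

Lemma card_pairs n : (2 * #|pairs n| <= n * n)%N.
Proof.
set B := [set (e.2, e.1) | e in pairs n].
have cB : #|B| = #|pairs n| by apply: card_imset => -[a b] -[c d] /= [-> ->].
have AB : pairs n :&: B = set0.
  apply/setP => -[a b]; rewrite !inE; apply/negbTE/nandP.
  case: ltnP => ab; [right | by left].
  by apply/imsetP => -[[c d]]; rewrite inE /= => cd [ad bc]; move: ab; rewrite ad bc /=; lia.
have := cardsUI (pairs n) B; rewrite AB cards0 addn0 cB => cU.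
by have := max_card (pairs n :|: B); rewrite card_prod card_ord; lia.
Qed.

Lemma Gnp_prob_le_exp n (p : R) (r : nat) (P : {set 'I_n * 'I_n} -> Prop) (x : R) :
  0 <= p <= 1 ->
  (forall E : {set 'I_n * 'I_n}, E \subset pairs n -> P E -> (r <= #|pairs n :\: E|)%N) ->
  2 * (1 - p) * #|pairs n|%:R - r%:R <= x -> Gnp_prob p P <= exp x.
Proof.
move=> p01 many x_ge.
apply: le_trans (Gnp_prob_le_non_edges (l := 3%:R) p01 _ many) _; first by rewrite ler1n.
rewrite ler_pdivrMr ?exprn_gt0 //; set y := 2 * (1 - p).
have e1 : (p + 3 * (1 - p)) ^+ #|pairs n| <= exp y ^+ #|pairs n|.
  apply: lerXn2r; rewrite ?nnegrE ?(ltW (exp_gt0 _)) //; last first.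
    by apply: le_trans (exp_ge1D y); rewrite /y; lra.
  by case/andP: p01; lra.
have e2 : exp 1 ^+ r <= 3 ^+ r.
  by apply: lerXn2r; rewrite ?nnegrE ?(ltW (exp_gt0 _)) //; apply/RleP/exp_le_3.
apply: (le_trans e1); apply: (@le_trans _ _ (exp x * exp 1 ^+ r)).
  rewrite !expn_exp -[exp x * _]RmultE -exp_plus; apply: ler_exp.
  by rewrite !RealsE mulr1 /y; lra.
by rewrite ler_wpM2l // ltW // exp_gt0.
Qed.

Lemma exponent_bound n (p : R) : (10 <= n)%N -> 1 - (10 * n%:R)^-1 <= p <= 1 ->
  2 * (1 - p) * #|pairs n|%:R - (n.-1 %/ 4)%:R <= - 20^-1 * n%:R.
Proof.
move=> n10 /andP [p_lo p_hi]; set nR : R := n%:R; set q := 1 - p.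
have nR10 : 10 <= nR by rewrite ler_nat.
have q_small : q * (10 * nR) <= 1.
  have inv : (10 * nR)^-1 * (10 * nR) = 1 by rewrite mulVf //; apply/lt0r_neq0; lra.
  rewrite -[X in _ <= X]inv; apply: ler_wpM2r; rewrite /q; lra.
have N_le : 2 * #|pairs n|%:R <= nR * nR by rewrite -natrM -(natrM _ n) ler_nat card_pairs.
have n_le : nR <= 4 * (n.-1 %/ 4)%:R + 4.
  by rewrite -[4]/(4%:R) -natrM -natrD ler_nat; lia.
have h1 : 0 <= q * (nR * nR - 2 * #|pairs n|%:R) by rewrite mulr_ge0 ?subr_ge0 // /q; lra.
have h2 : 0 <= nR * (1 - q * (10 * nR)) by rewrite mulr_ge0 ?subr_ge0 //; lra.
nra.
Qed.

Theorem mainTheorem3 :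
  exists (c : R) (n0 : nat), (0 < c)%R /\
    forall (n : nat) (p : R), (n0 <= n)%N ->
      (1 - (10 * n%:R)^-1 <= p <= 1)%R ->
      (@Gnp_prob n p (@even_decomposable n) <= exp (- c * n%:R))%R.
Proof.
exists 20^-1, 10%N; split; first by rewrite invr_gt0 ltr0n.
move=> n p n10 hp.
have p01 : 0 <= p <= 1.
  case/andP: hp => p_lo ->; rewrite andbT; apply: le_trans p_lo.
  by rewrite subr_ge0 -natrM invf_le1 ?ltr0n ?ler1n; lia.
have many (E : {set 'I_n * 'I_n}) :
    E \subset pairs n -> even_decomposable E -> (n.-1 %/ 4 <= #|pairs n :\: E|)%N.
  move=> EA /(even_decomposable_card_nonuniversal EA).
  by have := card_nonuniversal E; lia.
by apply: (Gnp_prob_le_exp p01 many); rewrite RmultE RoppE; exact: exponent_bound.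
Qed.
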